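(* Let $q\in\mathbb{C}$, $|q|<1$, $\ell\in\mathbb{N}$, $\alpha_j,\beta_j\in\mathbb{N}$ for $j=1,\dots,\ell$. For $k\ge1$ and a tuple $\mathbf{r}=(r_1,\dots,r_m)\in\mathbb{Z}_{\ge0}^m$ define $$\Psi_k(\mathbf{r})=(-1)^k\Big(\sum_{j=2}^k(-1)^j\,\mathfrak{z}_q^{(j-1,r_1,\dots,r_m)}[j,r_1,\dots,r_m]-\mathfrak{z}_q^{(1,r_1,\dots,r_m)}[1,r_1,\dots,r_m]\Big).$$ Then $$\Psi_{\alpha_1}(0^{\beta_1-1},\alpha_2,0^{\beta_2-1},\dots,\alpha_\ell,0^{\beta_\ell-1})=\Psi_{\beta_\ell}(0^{\alpha_\ell-1},\beta_{\ell-1},0^{\alpha_{\ell-1}-1},\dots,\beta_1,0^{\alpha_1-1}),$$ where $0^n$ denotes $n$ consecutive zeros. (In the paper's word notation: $\zeta^{\widetilde{\mathrm{IV}}}[\varphi_{\alpha_1}y^{\beta_1-1}\rho^{\alpha_2}y^{\beta_2}\cdots\rho^{\alpha_\ell}y^{\beta_\ell}]=\zeta^{\widetilde{\mathrm{IV}}}[\varphi_{\beta_\ell}y^{\alpha_\ell-1}\rho^{\beta_{\ell-1}}y^{\alpha_{\ell-1}}\cdots\rho^{\beta_1}y^{\alpha_1}]$ with $\varphi_k=(-1)^k(\sum_{j=2}^k(-1)^jz_j-\theta)$.)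
   Context: $\mathfrak{z}_q^{\mathbf{t}}[\mathbf{s}]=\sum_{k_1>\dots>k_d>0}\prod_j\frac{q^{k_jt_j}}{(1-q^{k_j})^{s_j}}$. The values $\mathfrak{z}_q^{(j-1,\mathbf{r})}[j,\mathbf{r}]$ ($j\ge2$) are type IV values and $\mathfrak{z}_q^{(1,\mathbf{r})}[1,\mathbf{r}]$ the regularizing type II values; in word form $z_j=\rho^{j-1}\pi y$, $\theta=\rho y$, with a type-$\widetilde{\mathrm{IV}}$ word $z_j\rho^{r_1}y\cdots\rho^{r_m}y$ (resp. $\theta\rho^{r_1}y\cdots\rho^{r_m}y$) realized as $\mathfrak{z}_q^{(j-1,\mathbf{r})}[j,\mathbf{r}]$ (resp. $\mathfrak{z}_q^{(1,\mathbf{r})}[1,\mathbf{r}]$). For $k=1$ the sum over $j$ is empty. *)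

From Stdlib Require Import Reals List.
From Coquelicot Require Import Coquelicot.
Import ListNotations.
Open Scope C_scope.

(** Truncated multiple q-sum:
    sum over N >= k_1 > ... > k_d > 0 of prod_j q^(k_j t_j) / (1 - q^(k_j))^(s_j),
    where ts = [(t_1,s_1); ...; (t_d,s_d)]. *)
Fixpoint zq_trunc (q : C) (ts : list (nat * nat)) (N : nat) : C :=
  match ts with
  | [] => 1
  | (t, s) :: rest =>
      (fix aux (n : nat) : C :=
         match n with
         | O => 0
         | S m => aux m + (q ^ (S m * t) / (1 - q ^ (S m)) ^ s) * zq_trunc q rest m
         end) N
  end.

Definition Clim_seq (u : nat -> C) : C :=
  @lim (CompleteNormedModule.CompleteSpace _ C_CompleteNormedModule)
       (filtermap u eventually).

Definition zq (q : C) (t s : list nat) : C :=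
  Clim_seq (fun N => zq_trunc q (combine t s) N).

Definition Psi (q : C) (k : nat) (r : list nat) : C :=
  (- 1) ^ k *
  (sum_n_m (fun j => (- 1) ^ j * zq q ((j - 1)%nat :: r) (j :: r)) 2 k
   - zq q (1%nat :: r) (1%nat :: r)).

Definition zeros (n : nat) : list nat := repeat 0%nat n.

(* Write a_k = q^k / (1 - q^k).  Since 1 / (1 - q^k) = 1 + a_k, the alternating
   sum defining Psi_k(r) telescopes to the q-MZV with t = s = (k, r), i.e. to the
   series over k of a word in two letters: rho multiplies by a_k and y sums over
   all smaller indices.

   Such a series is invariant under the duality "reverse the word and swap the
   letters".  With x = q^k one has a_k * sum_m c_m x^m = sum_m (sum_(j<m) c_j) x^m,
   so in the truncated double sum sum_(k,m <= N) f(k) g(m) q^(km) a letter rho can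
   be moved off the first word and turned into a letter y in front of the second
   one (and symmetrically), up to a boundary term in q^(kN) that tends to 0.
   Moving every letter of w across turns the pair (w, empty) into (empty, dual w).
   The two index tuples of the theorem encode mutually dual words. *)

From Stdlib Require Import Reals List Lra Lia FunctionalExtensionality.
From Coquelicot Require Import Coquelicot.
Import ListNotations.
Open Scope C_scope.

Lemma is_lim_seq_ratio_pow (p : nat) :
  is_lim_seq (fun n => ((INR n + 3) / (INR n + 2)) ^ p)%R 1%R.
Proof.
  assert (Hratio : is_lim_seq (fun n => (INR n + 3) / (INR n + 2))%R 1%R).
  { apply is_lim_seq_ext with (fun n => 1 + / (INR n + 2))%R.
    { intro n. field. pose proof (pos_INR n). lra. }
    assert (Hinv : is_lim_seq (fun n => / (INR n + 2))%R 0%R).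
    { apply (is_lim_seq_inv _ p_infty); [|discriminate].
      eapply is_lim_seq_plus; [apply is_lim_seq_INR | apply is_lim_seq_const | reflexivity]. }
    pose proof (is_lim_seq_plus' _ _ _ _ (is_lim_seq_const 1%R) Hinv) as H.
    rewrite Rplus_0_r in H. exact H. }
  induction p as [|p IH].
  - apply is_lim_seq_const.
  - pose proof (is_lim_seq_mult' _ _ _ _ Hratio IH) as H.
    rewrite Rmult_1_l in H. exact H.
Qed.

Lemma ex_series_poly_geom_pos (p : nat) (r : R) : (0 < r < 1)%R ->
  ex_series (fun n => (INR n + 2) ^ p * r ^ n)%R.
Proof.
  intros Hr.
  apply ex_series_ext with (fun n => Rabs ((INR n + 2) ^ p * r ^ n))%R.
  { intro n. apply Rabs_pos_eq. pose proof (pos_INR n).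
    apply Rmult_le_pos; apply pow_le; lra. }
  apply ex_series_DAlembert with r; [lra | |].
  - intro n. pose proof (pos_INR n).
    apply Rmult_integral_contrapositive; split; apply pow_nonzero; lra.
  - apply is_lim_seq_ext with (fun n => ((INR n + 3) / (INR n + 2)) ^ p * r)%R.
    { intro n. rewrite S_INR. pose proof (pos_INR n).
      assert (Hn : ((INR n + 2) ^ p <> 0)%R) by (apply pow_nonzero; lra).
      assert (Hr' : (r ^ n <> 0)%R) by (apply pow_nonzero; lra).
      replace (INR n + 1 + 2)%R with (INR n + 3)%R by ring.
      rewrite Rabs_pos_eq.
      - unfold Rdiv at 1. rewrite Rpow_mult_distr, pow_inv.
        change (r ^ S n)%R with (r * r ^ n)%R. field. auto.
      - apply Rmult_le_pos; [apply Rmult_le_pos; apply pow_le; lra|].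
        left. apply Rinv_0_lt_compat, Rmult_lt_0_compat; apply pow_lt; lra. }
    pose proof (is_lim_seq_mult' _ _ _ _ (is_lim_seq_ratio_pow p) (is_lim_seq_const r)) as H.
    rewrite Rmult_1_l in H. exact H.
Qed.

Lemma ex_series_poly_geom (p : nat) (r : R) : (0 <= r < 1)%R ->
  ex_series (fun n => (INR n + 2) ^ p * r ^ n)%R.
Proof.
  intros Hr.
  apply (@ex_series_le R_AbsRing R_CompleteNormedModule)
    with (fun n => (INR n + 2) ^ p * ((1 + r) / 2) ^ n)%R.
  - intro n. change norm with Rabs. pose proof (pos_INR n).
    rewrite Rabs_pos_eq by (apply Rmult_le_pos; apply pow_le; lra).
    apply Rmult_le_compat_l; [apply pow_le; lra | apply pow_incr; lra].
  - apply ex_series_poly_geom_pos. lra.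
Qed.

Lemma Clim_seq_correct (u : nat -> C) (l : C) :
  filterlim u eventually (locally l) -> Clim_seq u = l.
Proof.
  intros Hu. unfold Clim_seq.
  set (T := CompleteNormedModule.CompleteSpace _ C_CompleteNormedModule).
  set (F := filtermap u eventually).
  assert (PF : ProperFilter F) by apply filtermap_proper_filter, eventually_filter.
  assert (Hlim : filterlim u eventually (locally (@lim T F))).
  { apply filterlim_locally. intro eps. apply (complete_cauchy (T := T) F PF).
    intro e. exists l. exact (proj1 (filterlim_locally u l) Hu e). }
  assert (ProperFilter' (@eventually)) by apply Proper_StrongProper, eventually_filter.
  exact (filterlim_locally_unique (K := C_AbsRing) (V := C_NormedModule) u _ _ Hlim Hu).
Qed.

Lemma filterlim_Cplus (u v : nat -> C) (a b : C) :
  filterlim u eventually (locally a) -> filterlim v eventually (locally b) ->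
  filterlim (fun n => u n + v n) eventually (locally (a + b)).
Proof.
  intros Hu Hv. apply (filterlim_comp_2 u v Cplus Hu Hv).
  exact (filterlim_plus (K := C_AbsRing) (V := C_NormedModule) a b).
Qed.

Lemma filterlim_Copp (u : nat -> C) (a : C) :
  filterlim u eventually (locally a) ->
  filterlim (fun n => - u n) eventually (locally (- a)).
Proof.
  intros Hu. apply (filterlim_comp _ _ _ u Copp _ _ _ Hu).
  exact (filterlim_opp (K := C_AbsRing) (V := C_NormedModule) a).
Qed.

Lemma filterlim_Cminus (u v : nat -> C) (a b : C) :
  filterlim u eventually (locally a) -> filterlim v eventually (locally b) ->
  filterlim (fun n => u n - v n) eventually (locally (a - b)).
Proof. intros Hu Hv. apply filterlim_Cplus; [exact Hu | exact (filterlim_Copp v b Hv)]. Qed.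

Lemma filterlim_Cmod_bound_0 (u : nat -> C) (b : nat -> R) :
  (forall n, (Cmod (u n) <= b n)%R) -> is_lim_seq b 0%R ->
  filterlim u eventually (locally (RtoC 0)).
Proof.
  intros Hub Hb. apply (filterlim_norm_zero (V := C_NormedModule)).
  change (is_lim_seq (fun n => Cmod (u n)) 0%R).
  apply (is_lim_seq_le_le (fun _ => 0%R) _ b); [|apply is_lim_seq_const|exact Hb].
  intro n. split; [apply Cmod_ge_0 | apply Hub].
Qed.

Fixpoint psum (f : nat -> C) (n : nat) : C :=
  match n with O => 0 | S n => psum f n + f n end.

Lemma psum_ext (f g : nat -> C) (n : nat) :
  (forall j, (j < n)%nat -> f j = g j) -> psum f n = psum g n.
Proof.
  induction n as [|n IH]; intros Hfg; simpl; [reflexivity|].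
  rewrite IH by (intros; apply Hfg; lia). now rewrite Hfg by lia.
Qed.

Lemma psum_plus (f g : nat -> C) (n : nat) :
  psum (fun j => f j + g j) n = psum f n + psum g n.
Proof. induction n as [|n IH]; simpl; [ring | rewrite IH; ring]. Qed.

Lemma psum_scal (c : C) (f : nat -> C) (n : nat) :
  psum (fun j => c * f j) n = c * psum f n.
Proof. induction n as [|n IH]; simpl; [ring | rewrite IH; ring]. Qed.

Lemma psum_zero (n : nat) : psum (fun _ => 0) n = 0.
Proof. induction n as [|n IH]; simpl; [reflexivity | rewrite IH; ring]. Qed.

Lemma psum_shift (f : nat -> C) (n : nat) :
  psum f (S n) = f O + psum (fun j => f (S j)) n.
Proof.
  induction n as [|n IH]; [simpl; ring|].
  change (psum f (S (S n))) with (psum f (S n) + f (S n)). rewrite IH. simpl. ring.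
Qed.

Lemma psum_swap (f : nat -> nat -> C) (n m : nat) :
  psum (fun k => psum (f k) m) n = psum (fun j => psum (fun k => f k j) n) m.
Proof.
  induction n as [|n IH]; simpl; [now rewrite psum_zero|].
  now rewrite IH, <- psum_plus.
Qed.

Lemma psum_Cmod_le (f : nat -> C) (n : nat) (M : R) :
  (forall j, (j < n)%nat -> (Cmod (f j) <= M)%R) -> (Cmod (psum f n) <= INR n * M)%R.
Proof.
  induction n as [|n IH]; intros Hf.
  - simpl. rewrite Cmod_0. lra.
  - simpl psum. rewrite S_INR.
    eapply Rle_trans; [apply Cmod_triangle|].
    pose proof (IH (fun j Hj => Hf j ltac:(lia))). pose proof (Hf n ltac:(lia)). lra.
Qed.

Lemma ex_series_psum_lim (f : nat -> C) :
  ex_series (K := C_AbsRing) (V := C_NormedModule) f ->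
  exists l, filterlim (fun N => psum f (S N)) eventually (locally l).
Proof.
  intros [l Hl]. exists l. apply (filterlim_ext (sum_n f)); [|exact Hl].
  induction x as [|N IH].
  - rewrite sum_O. simpl. ring.
  - rewrite sum_Sn, IH. reflexivity.
Qed.

Definition qfrac (q : C) (k : nat) : C := q ^ k / (1 - q ^ k).

(* A word in the letters [true] = rho and [false] = y of the paper, evaluated
   at the summation index [k]. *)
Fixpoint word_term (q : C) (w : list bool) (k : nat) : C :=
  match w with
  | [] => match k with O => 1 | S _ => 0 end
  | true :: w' => qfrac q k * word_term q w' k
  | false :: w' => psum (word_term q w') k
  end.

Definition word_psum (q : C) (w : list bool) (N : nat) : C := psum (word_term q w) (S N).

Definition dual (w : list bool) : list bool := rev (map negb w).

Definition kernel_sum (q : C) (N : nat) (u v : list bool) : C :=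
  psum (fun k => psum (fun m => word_term q u k * word_term q v m * q ^ (k * m)) (S N)) (S N).

Definition kernel_defect (q : C) (N : nat) (u v : list bool) : C :=
  psum (fun k => word_term q (true :: u) k * word_term q (false :: v) (S N) * q ^ (k * N)) (S N).

Lemma qfrac_0 (q : C) : qfrac q 0 = 0.
Proof.
  unfold qfrac. simpl. replace (1 - 1) with (RtoC 0) by ring.
  unfold Cdiv, Cinv, Cmult. simpl. apply injective_projections; simpl; unfold Rdiv; ring.
Qed.

Lemma word_term_0 (q : C) (w : list bool) : w <> [] -> word_term q w 0 = 0.
Proof.
  destruct w as [|[|] w]; intros Hw; simpl; [congruence | rewrite qfrac_0; ring | reflexivity].
Qed.

Lemma one_minus_pow_neq0 (q : C) (k : nat) : (Cmod q < 1)%R -> 1 - q ^ S k <> 0.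
Proof.
  intros Hq H.
  assert (Hpow : Cmod (q ^ S k) = 1%R).
  { replace (q ^ S k) with (1 - (1 - q ^ S k)) by ring.
    rewrite H. replace (1 - 0) with (RtoC 1) by ring. apply Cmod_1. }
  rewrite Cmod_pow in Hpow. pose proof (Cmod_ge_0 q).
  pose proof (pow_lt_1_compat (Cmod q) (S k) ltac:(lra) ltac:(lia)). lra.
Qed.

Lemma psum_partial_geom (c : nat -> C) (x : C) (N : nat) : 1 - x <> 0 ->
  psum (fun m => psum c m * x ^ m) (S N) =
  x / (1 - x) * psum (fun j => c j * x ^ j) (S N) - x / (1 - x) * x ^ N * psum c (S N).
Proof.
  intros Hx. induction N as [|N IH]; [simpl; field; exact Hx|].
  change (psum (fun m => psum c m * x ^ m) (S (S N))) with
    (psum (fun m => psum c m * x ^ m) (S N) + psum c (S N) * x ^ S N).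
  rewrite IH. simpl psum. rewrite !Cpow_S. field. exact Hx.
Qed.

Lemma kernel_sum_sym (q : C) (N : nat) (u v : list bool) :
  kernel_sum q N u v = kernel_sum q N v u.
Proof.
  unfold kernel_sum. rewrite psum_swap.
  apply psum_ext. intros j _. apply psum_ext. intros k _. rewrite Nat.mul_comm. ring.
Qed.

Lemma kernel_sum_nil_r (q : C) (N : nat) (u : list bool) :
  kernel_sum q N u [] = word_psum q u N.
Proof.
  unfold kernel_sum, word_psum. apply psum_ext. intros k _.
  rewrite psum_shift, (psum_ext _ (fun _ => 0)), psum_zero, Nat.mul_0_r by (intros; simpl; ring).
  simpl. ring.
Qed.

Lemma kernel_sum_move_true (q : C) (N : nat) (u v : list bool) : (Cmod q < 1)%R -> u <> [] ->
  kernel_sum q N (true :: u) v = kernel_sum q N u (false :: v) + kernel_defect q N u v.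
Proof.
  intros Hq Hu. unfold kernel_sum, kernel_defect. rewrite <- psum_plus.
  apply psum_ext. intros [|k] _; simpl word_term.
  - rewrite (word_term_0 q u Hu).
    rewrite (psum_ext (fun m => _ * 0 * _ * _) (fun _ => 0)) by (intros; ring).
    rewrite (psum_ext (fun m => 0 * _ * _) (fun _ => 0)) by (intros; ring).
    rewrite psum_zero. ring.
  - set (x := q ^ S k). assert (Hx : 1 - x <> 0) by now apply one_minus_pow_neq0.
    rewrite (psum_ext _ (fun m => qfrac q (S k) * word_term q u (S k) * (word_term q v m * x ^ m)))
      by (intros; unfold x; rewrite Cpow_mult_r; ring).
    rewrite (psum_ext (fun m => word_term q u (S k) * psum (word_term q v) m * q ^ (S k * m))
               (fun m => word_term q u (S k) * (psum (word_term q v) m * x ^ m)))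
      by (intros; unfold x; rewrite Cpow_mult_r; ring).
    rewrite !psum_scal, psum_partial_geom, Cpow_mult_r by exact Hx.
    fold x. unfold qfrac. fold x. simpl psum. ring.
Qed.

Lemma kernel_sum_move_false (q : C) (N : nat) (u v : list bool) : (Cmod q < 1)%R -> v <> [] ->
  kernel_sum q N (false :: u) v = kernel_sum q N u (true :: v) - kernel_defect q N v u.
Proof.
  intros Hq Hv. rewrite kernel_sum_sym, (kernel_sum_sym q N u), kernel_sum_move_true by auto.
  ring.
Qed.

Section Bounds.

Variable q : C.
Hypothesis Hq : (Cmod q < 1)%R.

Let B : R := / (1 - Cmod q).

Let B_ge_1 : (1 <= B)%R.
Proof. pose proof (Cmod_ge_0 q). unfold B. rewrite <- Rinv_1. apply Rinv_le_contravar; lra. Qed.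

Let pow_Cmod_le_1 (k : nat) : (0 <= Cmod q ^ k <= 1)%R.
Proof.
  pose proof (Cmod_ge_0 q).
  split; [apply pow_le | rewrite <- (pow1 k); apply pow_incr]; lra.
Qed.

Lemma qfrac_Cmod_le (k : nat) : (Cmod (qfrac q k) <= B * Cmod q ^ k)%R.
Proof.
  pose proof (Cmod_ge_0 q). pose proof (pow_Cmod_le_1 k).
  destruct k as [|k]; [rewrite qfrac_0, Cmod_0; nra|].
  pose proof (pow_Cmod_le_1 k).
  unfold qfrac. rewrite Cmod_div, Cmod_pow by now apply one_minus_pow_neq0.
  unfold Rdiv. rewrite Rmult_comm. apply Rmult_le_compat_r; [lra|].
  apply Rinv_le_contravar; [lra|].
  assert (Htri := norm_triangle_inv (V := C_NormedModule) (RtoC 1) (q ^ S k)).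
  change norm with Cmod in Htri. rewrite Cmod_1, Cmod_pow in Htri.
  pose proof (Rle_abs (1 - Cmod q ^ S k)).
  assert (Cmod q ^ S k <= Cmod q)%R by (simpl; nra).
  change (minus (RtoC 1) (q ^ S k)) with (1 - q ^ S k) in Htri. lra.
Qed.

Lemma word_term_Cmod_le (w : list bool) (k K : nat) : (k <= K)%nat ->
  (Cmod (word_term q w k) <= (B * INR (S K)) ^ length w)%R.
Proof.
  assert (HK : (1 <= INR (S K))%R) by (rewrite S_INR; pose proof (pos_INR K); lra).
  assert (HX : (1 <= B * INR (S K))%R) by nra.
  revert k. induction w as [|[|] w IH]; intros k Hk; simpl word_term; simpl length.
  - destruct k; [rewrite Cmod_1 | rewrite Cmod_0]; simpl; lra.
  - rewrite Cmod_mult. apply Rmult_le_compat; try apply Cmod_ge_0; [|now apply IH].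
    pose proof (qfrac_Cmod_le k). pose proof (pow_Cmod_le_1 k). nra.
  - eapply Rle_trans; [apply psum_Cmod_le with (M := ((B * INR (S K)) ^ length w)%R)|].
    { intros j Hj. apply IH. lia. }
    rewrite <- tech_pow_Rmult. apply Rmult_le_compat_r; [apply pow_le; lra|].
    apply le_INR in Hk. rewrite S_INR in *. nra.
Qed.

Lemma kernel_defect_lim (u v : list bool) :
  filterlim (fun N => kernel_defect q N u v) eventually (locally (RtoC 0)).
Proof.
  set (p := (length u + length v + 3)%nat).
  apply filterlim_Cmod_bound_0 with (fun N => B ^ p * ((INR N + 2) ^ p * Cmod q ^ N))%R.
  - intros N. set (X := (B * INR (S (S N)))%R).
    assert (HX : (INR (S N) <= X /\ 1 <= X)%R).
    { unfold X. rewrite !S_INR. pose proof (pos_INR N). nra. }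
    assert (HXp : (0 <= X ^ S (length u) * X ^ S (length v))%R).
    { apply Rmult_le_pos; apply pow_le; lra. }
    eapply Rle_trans; [apply psum_Cmod_le with
      (M := (X ^ S (length u) * X ^ S (length v) * Cmod q ^ N)%R)|].
    + intros [|j] Hj; rewrite !Cmod_mult.
      { simpl word_term. rewrite qfrac_0, Cmult_0_l, Cmod_0, Rmult_0_l, Rmult_0_l.
        pose proof (pow_Cmod_le_1 N). nra. }
      apply Rmult_le_compat; try apply Rmult_le_pos; try apply Cmod_ge_0.
      * apply Rmult_le_compat; try apply Cmod_ge_0; apply word_term_Cmod_le; lia.
      * rewrite Cmod_pow, Nat.mul_succ_l, Nat.add_comm, pow_add.
        pose proof (pow_Cmod_le_1 N). pose proof (pow_Cmod_le_1 (j * N)). nra.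
    + replace (B ^ p * ((INR N + 2) ^ p * Cmod q ^ N))%R
        with (X * (X ^ S (length u) * X ^ S (length v)) * Cmod q ^ N)%R.
      { rewrite (Rmult_assoc X). apply Rmult_le_compat_r; [|apply HX].
        apply Rmult_le_pos; [exact HXp | apply pow_Cmod_le_1]. }
      assert (Hp : (X * (X ^ S (length u) * X ^ S (length v)) = X ^ p)%R).
      { rewrite <- pow_add, tech_pow_Rmult. f_equal. unfold p. lia. }
      rewrite Hp. unfold X. rewrite Rpow_mult_distr.
      replace (INR (S (S N))) with (INR N + 2)%R by (rewrite !S_INR; ring). ring.
  - pose proof (ex_series_lim_0 _ (ex_series_poly_geom p (Cmod q)
      ltac:(pose proof (Cmod_ge_0 q); lra))) as H0.
    pose proof (is_lim_seq_mult' _ _ _ _ (is_lim_seq_const (B ^ p)%R) H0) as H.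
    rewrite Rmult_0_r in H. exact H.
Qed.

Lemma word_psum_lim_exists (w : list bool) :
  exists l, filterlim (word_psum q (true :: w)) eventually (locally l).
Proof.
  apply ex_series_psum_lim.
  apply (@ex_series_le C_AbsRing C_CompleteNormedModule)
    with (fun n => B ^ S (length w) * ((INR n + 2) ^ length w * Cmod q ^ n))%R.
  - intros n. change norm with Cmod. simpl word_term. rewrite Cmod_mult.
    pose proof (qfrac_Cmod_le n). pose proof (pow_Cmod_le_1 n).
    pose proof (word_term_Cmod_le w n n (le_n n)) as Hw.
    rewrite Rpow_mult_distr in Hw.
    assert (INR (S n) ^ length w <= (INR n + 2) ^ length w)%R.
    { apply pow_incr. rewrite S_INR. pose proof (pos_INR n). lra. }
    set (c := (B * B ^ length w * Cmod q ^ n)%R).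
    assert (Hc : (0 <= c)%R).
    { unfold c. pose proof (pow_le B (length w) ltac:(lra)). apply Rmult_le_pos; [nra | lra]. }
    apply Rle_trans with (B * Cmod q ^ n * (B ^ length w * INR (S n) ^ length w))%R.
    { apply Rmult_le_compat; try apply Cmod_ge_0; assumption. }
    rewrite <- tech_pow_Rmult.
    replace (B * Cmod q ^ n * (B ^ length w * INR (S n) ^ length w))%R
      with (c * INR (S n) ^ length w)%R by (unfold c; ring).
    replace (B * B ^ length w * ((INR n + 2) ^ length w * Cmod q ^ n))%R
      with (c * (INR n + 2) ^ length w)%R by (unfold c; ring).
    apply Rmult_le_compat_l; assumption.
  - apply (@ex_series_scal_l R_AbsRing R_NormedModule), ex_series_poly_geom.
    pose proof (Cmod_ge_0 q). lra.
Qed.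

End Bounds.

Lemma dual_cons_app (x : bool) (u v : list bool) : dual (x :: u) ++ v = dual u ++ negb x :: v.
Proof. unfold dual. simpl. now rewrite <- app_assoc. Qed.

Lemma kernel_sum_dual (q : C) (u v : list bool) : (Cmod q < 1)%R ->
  (v <> [] \/ hd false u = true) -> last u false = false ->
  filterlim (fun N => kernel_sum q N u v - kernel_sum q N [] (dual u ++ v))
    eventually (locally (RtoC 0)).
Proof.
  intros Hq. revert v. induction u as [|[|] u IH]; intros v Hv Hlast.
  - apply (filterlim_ext (fun _ => RtoC 0)); [intros N; simpl; ring | apply filterlim_const].
  - assert (Hu : u <> []) by (intros ->; discriminate).
    apply (filterlim_ext (fun N =>
      (kernel_sum q N u (false :: v) - kernel_sum q N [] (dual u ++ false :: v))
      + kernel_defect q N u v)).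
    { intros N. rewrite kernel_sum_move_true, dual_cons_app by assumption. simpl. ring. }
    replace (RtoC 0) with (RtoC 0 + RtoC 0) by ring.
    apply filterlim_Cplus; [|now apply kernel_defect_lim].
    apply IH; [left; discriminate|]. destruct u; [congruence | exact Hlast].
  - assert (Hv' : v <> []) by (destruct Hv as [Hv | Hv]; [exact Hv | discriminate]).
    apply (filterlim_ext (fun N =>
      (kernel_sum q N u (true :: v) - kernel_sum q N [] (dual u ++ true :: v))
      - kernel_defect q N v u)).
    { intros N. rewrite kernel_sum_move_false, dual_cons_app by assumption. simpl. ring. }
    replace (RtoC 0) with (RtoC 0 - RtoC 0) by ring.
    apply filterlim_Cminus; [|now apply kernel_defect_lim].
    apply IH; [left; discriminate|]. destruct u; [reflexivity | exact Hlast].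
Qed.

Lemma word_psum_dual (q : C) (w : list bool) : (Cmod q < 1)%R ->
  hd false w = true -> last w false = false ->
  filterlim (fun N => word_psum q w N - word_psum q (dual w) N) eventually (locally (RtoC 0)).
Proof.
  intros Hq Hhd Hlast.
  apply (filterlim_ext (fun N => kernel_sum q N w [] - kernel_sum q N [] (dual w ++ []))).
  { intros N. now rewrite app_nil_r, kernel_sum_nil_r, kernel_sum_sym, kernel_sum_nil_r. }
  apply kernel_sum_dual; auto.
Qed.

Definition word_value (q : C) (w : list bool) : C := Clim_seq (word_psum q w).

Lemma word_value_correct (q : C) (w : list bool) : (Cmod q < 1)%R -> hd false w = true ->
  filterlim (word_psum q w) eventually (locally (word_value q w)).
Proof.
  intros Hq Hhd. destruct w as [|[|] w]; try discriminate.
  destruct (word_psum_lim_exists q Hq w) as [l Hl].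
  unfold word_value. now rewrite (Clim_seq_correct _ l Hl).
Qed.

Lemma word_value_dual (q : C) (w : list bool) : (Cmod q < 1)%R ->
  hd false w = true -> last w false = false -> word_value q (dual w) = word_value q w.
Proof.
  intros Hq Hhd Hlast. unfold word_value at 1. apply Clim_seq_correct.
  pose proof (filterlim_Cminus _ _ _ _
    (word_value_correct q w Hq Hhd) (word_psum_dual q w Hq Hhd Hlast)) as H.
  replace (word_value q w - RtoC 0) with (word_value q w) in H by ring.
  refine (filterlim_ext _ _ _ H). intros N. simpl. ring.
Qed.

Fixpoint index_word (ns : list nat) : list bool :=
  match ns with
  | [] => []
  | n :: ns' => repeat true n ++ false :: index_word ns'
  end.

Lemma index_word_last (ns : list nat) : last (index_word ns) false = false.
Proof.
  induction ns as [|n ns IH]; [reflexivity|]. simpl index_word.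
  induction (repeat true n) as [|b l IHl]; simpl.
  - destruct (index_word ns); [reflexivity | exact IH].
  - destruct (l ++ false :: index_word ns) eqn:E; [now destruct l | exact IHl].
Qed.

Lemma zq_trunc_cons (q : C) (t s : nat) (ts : list (nat * nat)) (N : nat) :
  zq_trunc q ((t, s) :: ts) N =
  psum (fun m => q ^ (S m * t) / (1 - q ^ S m) ^ s * zq_trunc q ts m) N.
Proof.
  induction N as [|N IH]; [reflexivity|].
  change (zq_trunc q ((t, s) :: ts) (S N)) with
    (zq_trunc q ((t, s) :: ts) N + q ^ (S N * t) / (1 - q ^ S N) ^ s * zq_trunc q ts N).
  now rewrite IH.
Qed.

Lemma Cdiv_pow (a b : C) (n : nat) : b <> 0 -> a ^ n / b ^ n = (a / b) ^ n.
Proof.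
  intros Hb. induction n as [|n IH]; [simpl; field|].
  rewrite !Cpow_S, <- IH. field. split; [now apply Cpow_nz | exact Hb].
Qed.

Lemma word_term_repeat_true (q : C) (n : nat) (w : list bool) (k : nat) :
  word_term q (repeat true n ++ w) k = qfrac q k ^ n * word_term q w k.
Proof. induction n as [|n IH]; simpl; [ring | rewrite IH; ring]. Qed.

Lemma zq_trunc_diag (q : C) (ns : list nat) (N : nat) : (Cmod q < 1)%R ->
  zq_trunc q (combine ns ns) N = word_psum q (index_word ns) N.
Proof.
  intros Hq. unfold word_psum. revert N. induction ns as [|n ns IH]; intros N.
  - rewrite psum_shift, (psum_ext _ (fun _ => 0)), psum_zero by reflexivity. simpl. ring.
  - simpl combine. simpl index_word.
    rewrite zq_trunc_cons, psum_shift, word_term_0 by (destruct n; discriminate).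
    rewrite Cplus_0_l. apply psum_ext. intros m _.
    rewrite word_term_repeat_true, IH, Cpow_mult_r, Cdiv_pow by now apply one_minus_pow_neq0.
    reflexivity.
Qed.

Lemma zq_trunc_shift (q : C) (i : nat) (r : list nat) (N : nat) : (Cmod q < 1)%R ->
  zq_trunc q (combine (i :: r) (S i :: r)) N =
  word_psum q (index_word (i :: r)) N + word_psum q (index_word (S i :: r)) N.
Proof.
  intros Hq. unfold word_psum. simpl combine.
  rewrite zq_trunc_cons, !psum_shift, !word_term_0 by (destruct i; discriminate).
  rewrite !Cplus_0_l, <- psum_plus. apply psum_ext. intros m _.
  change (index_word (?n :: r)) with (repeat true n ++ false :: index_word r).
  rewrite !word_term_repeat_true.
  change (word_term q (false :: index_word r) (S m)) with (word_psum q (index_word r) m).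
  rewrite <- zq_trunc_diag, Cpow_mult_r by exact Hq.
  assert (Hm : 1 - q ^ S m <> 0) by now apply one_minus_pow_neq0.
  unfold qfrac. rewrite <- !Cdiv_pow, !Cpow_S by exact Hm.
  field. split; [now apply Cpow_nz | exact Hm].
Qed.

Lemma zq_diag (q : C) (ns : list nat) : (Cmod q < 1)%R ->
  zq q ns ns = word_value q (index_word ns).
Proof.
  intros Hq. unfold zq, word_value. f_equal.
  apply functional_extensionality. intros N. now apply zq_trunc_diag.
Qed.

Lemma zq_shift (q : C) (i : nat) (r : list nat) : (Cmod q < 1)%R -> (1 <= i)%nat ->
  zq q (i :: r) (S i :: r) =
  word_value q (index_word (i :: r)) + word_value q (index_word (S i :: r)).
Proof.
  intros Hq Hi. apply Clim_seq_correct.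
  apply (filterlim_ext (fun N =>
    word_psum q (index_word (i :: r)) N + word_psum q (index_word (S i :: r)) N)).
  { intros N. symmetry. now apply zq_trunc_shift. }
  apply filterlim_Cplus; apply word_value_correct; try assumption; [|reflexivity].
  destruct i; [lia | reflexivity].
Qed.

Lemma sum_n_m_alternating_telescope (f : nat -> C) (k : nat) : (1 <= k)%nat ->
  sum_n_m (fun j => (- 1) ^ j * (f (j - 1)%nat + f j)) 2 k = f 1%nat + (- 1) ^ k * f k.
Proof.
  induction k as [|[|k] IH]; intros Hk; [lia| |].
  - rewrite sum_n_m_zero by lia. change (@zero C_AbelianMonoid) with (RtoC 0). simpl. ring.
  - rewrite sum_n_Sm, IH by lia. change (@plus C_AbelianMonoid) with Cplus.
    replace (S (S k) - 1)%nat with (S k) by lia. rewrite (Cpow_S _ (S k)).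
    match goal with |- ?a = ?b => change (@eq C a b) end. ring.
Qed.

Lemma Psi_word_value (q : C) (k : nat) (r : list nat) : (Cmod q < 1)%R -> (1 <= k)%nat ->
  Psi q k r = word_value q (index_word (k :: r)).
Proof.
  intros Hq Hk. set (V j := word_value q (index_word (j :: r))). unfold Psi.
  rewrite (sum_n_m_ext_loc _ (fun j => (- 1) ^ j * (V (j - 1)%nat + V j))).
  2:{ intros [|i] Hj; [lia|]. replace (S i - 1)%nat with i by lia.
      now rewrite zq_shift by (assumption || lia). }
  rewrite sum_n_m_alternating_telescope, zq_diag by assumption.
  replace ((- 1) ^ k * (V 1%nat + (- 1) ^ k * V k - word_value q (index_word (1%nat :: r))))
    with (((- 1) * (- 1)) ^ k * V k) by (rewrite Cpow_mult_l; unfold V; ring).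
  replace ((- 1) * (- 1)) with (RtoC 1) by ring. now rewrite Cpow_1_l, Cmult_1_l.
Qed.

Lemma Psi_dual (q : C) (k k' : nat) (r r' : list nat) :
  (Cmod q < 1)%R -> (1 <= k)%nat -> (1 <= k')%nat ->
  index_word (k' :: r') = dual (index_word (k :: r)) -> Psi q k r = Psi q k' r'.
Proof.
  intros Hq Hk Hk' Hdual. rewrite !Psi_word_value, Hdual by assumption.
  symmetry. apply word_value_dual; [exact Hq | | apply index_word_last].
  destruct k; [lia | reflexivity].
Qed.

Definition block (a b : nat) : list bool := repeat true a ++ repeat false b.

Lemma index_word_app (ns ms : list nat) : index_word (ns ++ ms) = index_word ns ++ index_word ms.
Proof. induction ns as [|n ns IH]; simpl; [reflexivity | now rewrite IH, <- app_assoc]. Qed.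

Lemma index_word_zeros (n : nat) : index_word (zeros n) = repeat false n.
Proof. induction n as [|n IH]; [reflexivity | simpl; unfold zeros in IH; now rewrite IH]. Qed.

Lemma index_word_blocks (f g : nat -> nat) (s : list nat) : (forall j, In j s -> (1 <= g j)%nat) ->
  index_word (flat_map (fun j => f j :: zeros (g j - 1)) s) =
  flat_map (fun j => block (f j) (g j)) s.
Proof.
  induction s as [|j s IH]; intros Hg; [reflexivity|]. simpl flat_map.
  rewrite <- IH by (intros; apply Hg; now right).
  assert (Hj := Hg j (or_introl eq_refl)).
  simpl index_word. rewrite index_word_app, index_word_zeros. unfold block.
  destruct (g j) as [|b]; [lia|]. simpl. now rewrite Nat.sub_0_r, <- app_assoc.
Qed.

Lemma dual_app (u v : list bool) : dual (u ++ v) = dual v ++ dual u.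
Proof. unfold dual. now rewrite map_app, rev_app_distr. Qed.

Lemma dual_block (a b : nat) : dual (block a b) = block b a.
Proof. unfold dual, block. now rewrite map_app, !map_repeat, rev_app_distr, !rev_repeat. Qed.

Lemma dual_blocks (f g : nat -> nat) (s : list nat) :
  dual (flat_map (fun j => block (f j) (g j)) s) = flat_map (fun j => block (g j) (f j)) (rev s).
Proof.
  induction s as [|j s IH]; [reflexivity|]. simpl.
  rewrite dual_app, IH, flat_map_app, dual_block. simpl. now rewrite app_nil_r.
Qed.

Theorem theorem8p5 (q : C) (l : nat) (alpha beta : nat -> nat) :
  (Cmod q < 1)%R ->
  (1 <= l)%nat ->
  (forall j, (1 <= j <= l)%nat -> (1 <= alpha j)%nat /\ (1 <= beta j)%nat) ->
  Psi q (alpha 1%nat)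
      (zeros (beta 1%nat - 1) ++
       flat_map (fun j => alpha j :: zeros (beta j - 1)) (seq 2 (l - 1)))
  =
  Psi q (beta l)
      (zeros (alpha l - 1) ++
       flat_map (fun j => beta j :: zeros (alpha j - 1)) (rev (seq 1 (l - 1)))).
Proof.
  intros Hq Hl Hab. destruct l as [|l]; [lia|]. rewrite Nat.sub_succ, Nat.sub_0_r.
  assert (Hin : forall j, In j (seq 1 (S l)) -> (1 <= alpha j)%nat /\ (1 <= beta j)%nat).
  { intros j Hj. apply in_seq in Hj. apply Hab. lia. }
  apply Psi_dual; [exact Hq | apply Hab; lia | apply Hab; lia |].
  change (alpha 1%nat :: _) with (flat_map (fun j => alpha j :: zeros (beta j - 1)) (seq 1 (S l))).
  replace (beta (S l) :: _)
    with (flat_map (fun j => beta j :: zeros (alpha j - 1)) (rev (seq 1 (S l))))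
    by (rewrite seq_S, rev_app_distr; reflexivity).
  rewrite !index_word_blocks, dual_blocks; [reflexivity | ..];
    intros j Hj; rewrite <- ?in_rev in Hj; now destruct (Hin j Hj).
Qed.
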